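(* Let $n>1$, $t,p\ge 1$ be integers, let $G$ be a regular graph of order $m$, and suppose $tpm>1$. If $n\equiv 0\pmod 2$, or $ntpm\equiv 1\pmod 2$, or $tpG$ is distance magic, then $tH_{n,p}\otimes G$ is distance magic.
   Context: A graph $G$ on $v$ vertices is distance magic if there is a bijection $f:V(G)\to\{1,\ldots,v\}$ and a constant $k$ such that for every vertex $x$, $\sum_{y\in N(x)}f(y)=k$, where $N(x)$ is the set of neighbours of $x$. $H_{n,p}$ denotes the complete multipartite graph with $p$ partite sets each of size $n$; $cH$ denotes the disjoint union of $c$ copies of $H$. The Kronecker (tensor) product $G\otimes H$ has vertex set $V(G)\times V(H)$, with $(g,h)\sim(g',h')$ iff $gg'\in E(G)$ and $hh'\in E(H)$. *)

From mathcomp Require Import all_boot.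
Set Implicit Arguments. Unset Strict Implicit. Unset Printing Implicit Defensive.

Definition simple_graph (T : finType) (e : rel T) : Prop :=
  symmetric e /\ irreflexive e.

Definition nbhd (T : finType) (e : rel T) (x : T) : {set T} := [set y | e x y].

Definition regular (T : finType) (e : rel T) : Prop :=
  exists r : nat, forall x : T, #|nbhd e x| = r.

(* Distance magic: a bijection f : V -> {1,...,|V|} and a constant k with
   sum_{y in N(x)} f y = k for every vertex x.  f is given as an injective
   map into nat with values in [1, |V|], hence a bijection onto {1..|V|}. *)
Definition distance_magic (T : finType) (e : rel T) : Prop :=
  exists f : T -> nat,
    injective f /\ (forall x, 0 < f x <= #|T|) /\
    exists k : nat, forall x : T, \sum_(y in nbhd e x) f y = k.

(* H_{n,p}: complete multipartite graph with p parts of size n.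
   Vertex (i, j) : part i, index j; adjacent iff in different parts. *)
Definition Hnp_rel (n p : nat) : rel ('I_p * 'I_n) :=
  fun u v => u.1 != v.1.

Definition copies_rel (c : nat) (T : finType) (e : rel T) : rel ('I_c * T) :=
  fun u v => (u.1 == v.1) && e u.2 v.2.

Definition kron_rel (T1 T2 : finType) (e1 : rel T1) (e2 : rel T2)
  : rel (T1 * T2) :=
  fun u v => e1 u.1 v.1 && e2 u.2 v.2.

Arguments Hnp_rel n p : clear implicits.
Arguments copies_rel c {T} e.

From mathcomp Require Import all_boot zify.
Set Implicit Arguments. Unset Strict Implicit. Unset Printing Implicit Defensive.

(* Let k = tpm and give the vertex ((c, (i, j)), x) the label j k + h_j(c, i, x) + 1,
   where each h_j is a bijection onto {0, ..., k-1}; these labels are exactly 1..nk.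
   The neighbours of ((c, (i, j)), x) are the ((c, (i', j')), y) with i' <> i and
   y ~ x, so the labelling is distance magic as soon as the sum of h_j(c, i', y)
   over all j and all y ~ x does not depend on c, i', x.
   If n is even or nk is odd there is an n x k Kotzig array (rows are permutations
   of {0, ..., k-1}, columns have a common sum); its rows give the h_j, and
   regularity of G makes the sum constant.  If tpG is distance magic with labelling
   g, take h_j = g - 1 for every j. *)

Definition kotzig_array (n k : nat) : Prop :=
  exists s : 'I_n -> 'I_k -> 'I_k,
    (forall j, injective (s j)) /\ exists C, forall a, \sum_(j < n) s j a = C.

Lemma kotzig_array0 k : kotzig_array 0 k.
Proof.
by exists (fun _ a => a); split=> [j|]; [apply: inj_id | exists 0 => a; rewrite big_ord0].
Qed.

Lemma kotzig_array2 k : kotzig_array 2 k.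
Proof.
exists (fun j a => if j == ord0 then a else rev_ord a); split.
  by case=> -[|j] ? /=; [apply: inj_id | apply: rev_ord_inj].
by exists k.-1 => a; rewrite !big_ord_recl big_ord0 /=; have := ltn_ord a; lia.
Qed.

(* For k = 2h+1 the rows a, a + h and 3h - a - (a + h) (all mod k) are permutations:
   the last one is a |-> -2a - 1 mod k, and 2 is invertible mod k. *)
Definition half_shift (h a : nat) : nat := if a <= h then a + h else a - h - 1.

Definition kotzig3_row (h j a : nat) : nat :=
  match j with 0 => a | 1 => half_shift h a | _ => 3 * h - a - half_shift h a end.

Lemma kotzig_array3 h : kotzig_array 3 h.*2.+1.
Proof.
have row_lt j (a : 'I_h.*2.+1) : kotzig3_row h j a < h.*2.+1.
  have := ltn_ord a; rewrite /kotzig3_row /half_shift.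
  by case: j => [|[|j]]; case: (leqP a h); lia.
exists (fun j a => inord (kotzig3_row h j a)); split.
  move=> j a b /(congr1 val) /=; rewrite (inordK (row_lt j a)) (inordK (row_lt j b)).
  move=> eq_row; apply: ord_inj; move: eq_row.
  have := ltn_ord a; have := ltn_ord b; rewrite /kotzig3_row /half_shift.
  by case: (j : nat) => [|[|j']]; case: (leqP a h); case: (leqP b h); lia.
exists (3 * h) => a; rewrite (eq_bigr (fun j : 'I_3 => kotzig3_row h j a)) => [|j _].
  rewrite !big_ord_recl big_ord0 /=; have := ltn_ord a.
  by rewrite /kotzig3_row /half_shift; case: (leqP a h); lia.
exact: inordK (row_lt j a).
Qed.

Lemma kotzig_arrayD n1 n2 k :
  kotzig_array n1 k -> kotzig_array n2 k -> kotzig_array (n1 + n2) k.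
Proof.
move=> [s1 [inj1 [C1 sum1]]] [s2 [inj2 [C2 sum2]]].
exists (fun j => match split j with inl j1 => s1 j1 | inr j2 => s2 j2 end); split.
  by move=> j; case: split.
exists (C1 + C2) => a; rewrite big_split_ord -(sum1 a) -(sum2 a).
congr (_ + _); apply: eq_bigr => j _.
  by rewrite -[lshift _ j]/(unsplit (inl j)) unsplitK.
by rewrite -[rshift _ j]/(unsplit (inr j)) unsplitK.
Qed.

Lemma kotzig_array_even q k : kotzig_array q.*2 k.
Proof.
elim: q => [|q IHq]; first exact: kotzig_array0.
by rewrite doubleS -add2n; apply: kotzig_arrayD (kotzig_array2 k) IHq.
Qed.

Lemma kotzig_array_exists n k : 1 < n -> ~~ odd n || odd k -> kotzig_array n k.
Proof.
move=> n_gt1; case n_odd: (odd n) => /=; last first.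
  by move=> _; rewrite -[n]odd_double_half n_odd; apply: kotzig_array_even.
move=> k_odd; move: n_gt1; rewrite -[n]odd_double_half n_odd; case: n./2 => [//|q] _.
rewrite -[k]odd_double_half k_odd doubleS -add2n addnA.
exact: kotzig_arrayD (kotzig_array3 _) (kotzig_array_even _ _).
Qed.

Lemma big_setX (R : Type) (idx : R) (op : Monoid.com_law idx) (I J : finType)
    (A : {set I}) (B : {set J}) (F : I * J -> R) :
  \big[op/idx]_(u in setX A B) F u = \big[op/idx]_(a in A) \big[op/idx]_(b in B) F (a, b).
Proof. by rewrite pair_big; apply: eq_big => -[a b]; rewrite ?in_setX. Qed.

Lemma nbhd_kron (T1 T2 : finType) (e1 : rel T1) (e2 : rel T2) x1 x2 :
  nbhd (kron_rel e1 e2) (x1, x2) = setX (nbhd e1 x1) (nbhd e2 x2).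
Proof. by apply/setP => -[y1 y2]; rewrite !inE. Qed.

Lemma nbhd_copies c (T : finType) (e : rel T) (s : 'I_c) x :
  nbhd (copies_rel c e) (s, x) = setX [set s] (nbhd e x).
Proof. by apply/setP => -[s' y]; rewrite !inE eq_sym. Qed.

Lemma nbhd_Hnp n p (i : 'I_p) (j : 'I_n) : nbhd (Hnp_rel n p) (i, j) = setX [set~ i] setT.
Proof. by apply/setP => -[i' j']; rewrite !inE eq_sym andbT. Qed.

Section KronCopiesHnp.

Variables (n t p : nat) (T : finType) (e : rel T).
Hypothesis e_regular : regular e.

Local Notation V := (('I_t * ('I_p * 'I_n)) * T)%type.
Local Notation W := (('I_t * 'I_p) * T)%type.
Local Notation G := (kron_rel (copies_rel t (Hnp_rel n p)) e).

Lemma sum_nbhd_kron_copies_Hnp (F : V -> nat) c i j x :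
  \sum_(v in nbhd G ((c, (i, j)), x)) F v =
  \sum_(i' in [set~ i]) \sum_(y in nbhd e x) \sum_(j' < n) F ((c, (i', j')), y).
Proof.
rewrite nbhd_kron nbhd_copies nbhd_Hnp !big_setX big_set1 big_setX /=.
apply: eq_bigr => i' _; rewrite exchange_big /=.
by apply: eq_bigr => y _; apply: eq_bigl => j'; rewrite in_setT.
Qed.

Lemma kron_distance_magic_of_column_sums (F : V -> nat) K :
  injective F -> (forall v, 0 < F v <= #|{: V}|) ->
  (forall c i x, \sum_(y in nbhd e x) \sum_(j < n) F ((c, (i, j)), y) = K) ->
  distance_magic G.
Proof.
move=> F_inj F_range F_sum; exists F; split=> //; split=> //.
exists (p.-1 * K) => -[[c [i j]] x]; rewrite sum_nbhd_kron_copies_Hnp.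
by rewrite (eq_bigr (fun _ => K)) => [|i' _]; rewrite ?F_sum // sum_nat_const cardsC1 card_ord.
Qed.

Lemma kron_distance_magic_of_layers (h : 'I_n -> W -> nat) :
  (forall j w, h j w < #|{: W}|) -> (forall j, injective (h j)) ->
  (exists K, forall c i x, \sum_(y in nbhd e x) \sum_(j < n) h j ((c, i), y) = K) ->
  distance_magic G.
Proof.
have [r deg_r] := e_regular; move=> h_lt h_inj [K h_sum].
pose F (v : V) := let: ((c, (i, j)), x) := v in j * #|{: W}| + h j ((c, i), x) + 1.
apply: (@kron_distance_magic_of_column_sums F (r * \sum_(j < n) (j * #|{: W}| + 1) + K)).
- move=> [[c [i j]] x] [[c' [i' j']] x'] /= /addIn /(congr1 (edivn^~ #|{: W}|)).
  rewrite !edivn_eq ?h_lt // => -[/ord_inj eq_j]; subst j'.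
  by move=> /h_inj [-> -> ->].
- move=> [[c [i j]] x] /=; have := h_lt j ((c, i), x); have := ltn_ord j.
  rewrite !card_prod !card_ord; nia.
move=> c i x; rewrite -(h_sum c i x) -(deg_r x) -sum_nat_const -big_split /=.
apply: eq_bigr => y _; rewrite -big_split /=.
by apply: eq_bigr => j _; rewrite addnAC.
Qed.

Lemma kron_distance_magic_of_kotzig : kotzig_array n #|{: W}| -> distance_magic G.
Proof.
have [r deg_r] := e_regular; move=> [s [s_inj [C s_sum]]].
apply: (@kron_distance_magic_of_layers (fun j w => s j (enum_rank w))) => [j w|j w w'|].
- exact: ltn_ord.
- by move=> /ord_inj /s_inj; apply: enum_rank_inj.
exists (r * C) => c i x; rewrite -(deg_r x) -sum_nat_const.
by apply: eq_bigr => y _; rewrite s_sum.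
Qed.

Lemma kron_distance_magic_of_copies : distance_magic (copies_rel (t * p) e) -> distance_magic G.
Proof.
have [r deg_r] := e_regular; move=> [g [g_inj [g_range [K g_sum]]]].
have card_tp : #|{: 'I_t * 'I_p}| = t * p by rewrite card_prod !card_ord.
have card_W : #|{: 'I_(t * p) * T}| = #|{: W}| by rewrite !card_prod !card_ord.
pose idx (w : W) : 'I_(t * p) * T := (cast_ord card_tp (enum_rank w.1), w.2).
have idx_inj : injective idx.
  by move=> [a x] [b y] [] /ord_inj /enum_rank_inj -> ->.
have sum_pred_g c i x : \sum_(y in nbhd e x) (g (idx ((c, i), y))).-1 = K - r.
  rewrite -(deg_r x) -sum1_card -(g_sum (idx ((c, i), x))) nbhd_copies big_setX big_set1.
  rewrite -sumnB => [|y _]; last by have := g_range (idx ((c, i), y)); case/andP.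
  by apply: eq_bigr => y _; rewrite subn1.
apply: (@kron_distance_magic_of_layers (fun _ w => (g (idx w)).-1)) => [j w|j w w'|].
- by have := g_range (idx w); rewrite card_W; lia.
- move=> eq_g; apply: idx_inj; apply: g_inj.
  by have := g_range (idx w); have := g_range (idx w'); lia.
exists (n * (K - r)) => c i x; rewrite exchange_big /=.
by rewrite (eq_bigr (fun _ => K - r)) => [|j _]; rewrite ?sum_pred_g // sum_nat_const card_ord.
Qed.

End KronCopiesHnp.

Theorem corollary2 (n t p : nat) (T : finType) (e : rel T) :
  1 < n -> 1 <= t -> 1 <= p ->
  simple_graph e -> regular e ->
  1 < t * p * #|T| ->
  (~~ odd n \/ odd (n * t * p * #|T|) \/ distance_magic (copies_rel (t * p) e)) ->
  distance_magic (kron_rel (copies_rel t (Hnp_rel n p)) e).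
Proof.
move=> n_gt1 _ _ _ e_reg _ [n_even | [ntpm_odd | copies_dm]].
- by apply: kron_distance_magic_of_kotzig e_reg _; apply: kotzig_array_exists; rewrite ?n_even.
- apply: kron_distance_magic_of_kotzig e_reg _; apply: kotzig_array_exists => //.
  by move: ntpm_odd; rewrite !card_prod !card_ord -!mulnA oddM => /andP [_ ->]; rewrite orbT.
- exact: kron_distance_magic_of_copies.
Qed.
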